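(* Let $n\ge 2$, $N=\{1,\dots,n\}$, for each $i\in N$ let $A_i$ be a nonempty finite set, $A=\prod_{i\in N}A_i$, and let $u_i:A\to\mathbb{R}$ for $i\in N$, with $u(a)=(u_i(a))_{i\in N}$. Then for every $\delta\in(0,1]$ and every $T\in\mathbb{N}$, $$F(\delta,T)=\operatorname{co}\left(\{v(a^{[n]}) : a^{[n]}\in A^n\}\right),$$ where $F(\delta,T)$ and $v$ are as defined in the context.
   Context: For $a^{[nT]}=(a^1,\dots,a^{nT})\in A^{nT}$ extend the indices periodically by $a^s=a^{s-nT}$ for $s\ge nT+1$, and define for $i\in N$ $$U_i(a^{[nT]})=\frac{1}{\sum_{k=1}^{nT}\delta^{k-1}}\sum_{k=1}^{nT}\delta^{k-1}u_i\big(a^{(i-1)T+k}\big),$$ and $U(a^{[nT]})=(U_i(a^{[nT]}))_{i\in N}\in\mathbb{R}^n$. Let $F(\delta,T)=\operatorname{co}\left(\bigcup_{a^{[nT]}\in A^{nT}}\{U(a^{[nT]})\}\right)$, where $\operatorname{co}$ denotes convex hull. For $a^{[n]}=(a^1,\dots,a^n)\in A^n$ extend indices by $a^s=a^{s-n}$ for $s\ge n+1$ and define $$v_i(a^{[n]})=\frac{1}{\sum_{k=1}^n\delta^{(k-1)T}}\sum_{k=1}^n\delta^{(k-1)T}u_i\big(a^{i+k-1}\big),\qquad v(a^{[n]})=(v_i(a^{[n]}))_{i\in N}.$$ (Interpretation: $F(\delta,T)$ is the set of periodic feasible payoffs of the overlapping-generations repeated game in which player $i$ of each generation lives $nT$ periods,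 entering $T$ periods after player $i-1$, with common discount factor $\delta$.) *)

From HB Require Import structures.
From mathcomp Require Import all_boot all_order all_algebra.
From mathcomp Require Import reals.
Set Implicit Arguments. Unset Strict Implicit. Unset Printing Implicit Defensive.
Import Order.TTheory GRing.Theory Num.Theory.
Local Open Scope ring_scope.

(* Players are N = 'I_n (0-indexed: player i of the paper is i.-1 here).
   A pure action profile is an element of {dffun forall i : 'I_n, A i}. *)
Definition profile (n : nat) (A : 'I_n -> finType) := {dffun forall i : 'I_n, A i}.

Section Defs.
Variables (R : realType) (n : nat) (A : 'I_n -> finType).
Variable (u : 'I_n -> profile A -> R).

(* payoff of player i at the (0-indexed) period s of the periodic extension
   of a finite sequence f : 'I_m -> profile A  (the index s is taken mod m;
   the default 0 is never used when m > 0). *)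
Definition upay (m : nat) (f : {ffun 'I_m -> profile A}) (i : 'I_n) (s : nat) : R :=
  oapp (fun j : 'I_m => u i (f j)) 0 (insub (s %% m)%N).

(* U_i(a^[nT]) :  paper index (i-1)T + k, k = 1..nT  becomes
   0-indexed i*T + k, k = 0..nT-1. *)
Definition Ui (delta : R) (T : nat) (a : {ffun 'I_(n * T) -> profile A}) (i : 'I_n) : R :=
  (\sum_(k < n * T) delta ^+ k)^-1 *
  \sum_(k < n * T) delta ^+ k * upay a i (i * T + k)%N.

Definition Uvec (delta : R) (T : nat) (a : {ffun 'I_(n * T) -> profile A}) : 'rV[R]_n :=
  \row_i Ui delta a i.

(* v_i(a^[n]) :  paper index i + k - 1, k = 1..n, weight delta^((k-1)T)
   becomes 0-indexed i + k, k = 0..n-1, weight delta^(k T). *)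
Definition vi (delta : R) (T : nat) (a : {ffun 'I_n -> profile A}) (i : 'I_n) : R :=
  (\sum_(k < n) delta ^+ (k * T))^-1 *
  \sum_(k < n) delta ^+ (k * T) * upay a i (i + k)%N.

Definition vvec (delta : R) (T : nat) (a : {ffun 'I_n -> profile A}) : 'rV[R]_n :=
  \row_i vi delta T a i.

End Defs.

Definition conv (R : realType) (n : nat) (S : 'rV[R]_n -> Prop) (x : 'rV[R]_n) : Prop :=
  exists (m : nat) (w : 'I_m -> R) (p : 'I_m -> 'rV[R]_n),
    [/\ forall j, 0 <= w j, \sum_j w j = 1, forall j, S (p j)
      & x = \sum_j w j *: p j].

Definition Fset (R : realType) (n : nat) (A : 'I_n -> finType)
  (u : 'I_n -> profile A -> R) (delta : R) (T : nat) : 'rV[R]_n -> Prop :=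
  conv (fun y => exists a : {ffun 'I_(n * T) -> profile A}, y = Uvec u delta a).

From HB Require Import structures.
From mathcomp Require Import all_boot all_order all_algebra.
From mathcomp Require Import reals.
From mathcomp Require Import zify ring.
Set Implicit Arguments. Unset Strict Implicit. Unset Printing Implicit Defensive.
Import Order.TTheory GRing.Theory Num.Theory.
Local Open Scope ring_scope.

(* Write a period k < nT as k = jT + r with r < T.  For fixed r, player i meets
   the slice a^r = (a_(jT+r))_j at the dates iT + jT + r, which are exactly the
   dates of v shifted by r; hence U(a) = sum_r (delta^r / sum_s delta^s) v(a^r),
   so the generators of F(delta, T) lie in the convex hull of the v(b).
   Conversely, repeating each b_j for T consecutive periods gives a sequence all
   of whose slices are b, so its payoff U is v(b). *)

Section ConvexHull.
Variables (R : realType) (n : nat).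
Implicit Types (S : 'rV[R]_n -> Prop) (x : 'rV[R]_n).

Lemma conv_sum_finType S (I : finType) (w : I -> R) (p : I -> 'rV[R]_n) :
  (forall i, 0 <= w i) -> \sum_i w i = 1 -> (forall i, S (p i)) ->
  conv S (\sum_i w i *: p i).
Proof.
move=> w_ge0 w_sum1 Sp.
exists #|I|, (w \o enum_val), (p \o enum_val); split => //=.
- by rewrite -w_sum1 [RHS]big_enum_val.
- by rewrite [LHS]big_enum_val.
Qed.

Lemma sub_conv S x : S x -> conv S x.
Proof.
move=> Sx; exists 1%N, (fun=> 1), (fun=> x); split => //.
- by rewrite big_ord1.
- by rewrite big_ord1 scale1r.
Qed.

Lemma conv_trans S (S' : 'rV[R]_n -> Prop) x :
  (forall y, S y -> conv S' y) -> conv S x -> conv S' x.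
Proof.
move=> SS' [m [w [p [w_ge0 w_sum1 Sp ->]]]].
have := fun j => SS' _ (Sp j); rewrite /conv => /fin_all_exists [k].
move=> /fin_all_exists [c] /fin_all_exists [q] convp.
have -> : \sum_j w j *: p j = \sum_j \sum_(l : 'I_(k j)) (w j * c j l) *: q j l.
  apply: eq_bigr => j _; have [_ _ _ ->] := convp j.
  by rewrite scaler_sumr; apply: eq_bigr => l _; rewrite scalerA.
rewrite sig_big_dep /=.
apply: conv_sum_finType => [[j l] /=||[j l] /=].
- by have [c_ge0 _ _ _] := convp j; rewrite mulr_ge0.
- have -> : \sum_(s : {j : 'I_m & 'I_(k j)}) w (tag s) * c (tag s) (tagged s) =
             \sum_j \sum_(l : 'I_(k j)) w j * c j l by rewrite sig_big_dep.
  rewrite -w_sum1.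
  by apply: eq_bigr => j _; have [_ c_sum1 _ _] := convp j; rewrite -mulr_sumr c_sum1 mulr1.
- by have [_ _ S'q _] := convp j.
Qed.

End ConvexHull.

Lemma sum_ord_mul (V : nmodType) (m T : nat) (F : nat -> V) :
  \sum_(k < m * T) F k = \sum_(j < m) \sum_(r < T) F (j * T + r)%N.
Proof.
elim: m => [|m IHm]; first by rewrite mul0n !big_ord0.
by rewrite mulSnr big_split_ord big_ord_recr /= IHm.
Qed.

Lemma modn_block (n T i k r : nat) : (r < T)%N ->
  ((i * T + (k * T + r)) %% (n * T) = (i + k) %% n * T + r)%N.
Proof.
move=> lt_rT; rewrite addnA -mulnDl.
case: n => [|n]; first by rewrite !modn0.
rewrite {1}(divn_eq (i + k) n.+1) mulnDl -mulnA -addnA modnMDl modn_small //.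
have := ltn_pmod (i + k) (ltn0Sn n); move: ((i + k) %% n.+1)%N => j lt_jn.
nia.
Qed.

Section Blocks.
Variables (X : Type) (n T : nat).

Lemma block_index_lt (j : 'I_n) (r : 'I_T) : (j * T + r < n * T)%N.
Proof. by have := ltn_ord j; have := ltn_ord r; nia. Qed.

Definition block_index (j : 'I_n) (r : 'I_T) : 'I_(n * T) :=
  Ordinal (block_index_lt j r).

Definition slice (a : {ffun 'I_(n * T) -> X}) (r : 'I_T) : {ffun 'I_n -> X} :=
  [ffun j => a (block_index j r)].

Hypothesis T_gt0 : (0 < T)%N.

Lemma block_of_lt (k : 'I_(n * T)) : (k %/ T < n)%N.
Proof. by rewrite ltn_divLR. Qed.

Definition stretch (b : {ffun 'I_n -> X}) : {ffun 'I_(n * T) -> X} :=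
  [ffun k => b (Ordinal (block_of_lt k))].

Lemma slice_stretch b r : slice (stretch b) r = b.
Proof.
apply/ffunP => j; rewrite !ffunE; congr (b _); apply: val_inj => /=.
by rewrite divnMDl // divn_small // addn0.
Qed.

End Blocks.

Section Weights.
Variables (R : realType) (delta : R) (T : nat).
Hypotheses (delta_gt0 : 0 < delta) (T_gt0 : (0 < T)%N).

Lemma sum_expr_gt0 m (e : nat -> nat) : (0 < m)%N -> 0 < \sum_(k < m) delta ^+ e k.
Proof.
case: m => // m _; rewrite big_ord_recl ltr_pwDl ?exprn_gt0 //.
by apply: sumr_ge0 => k _; rewrite exprn_ge0 // ltW.
Qed.

Definition weight (r : 'I_T) : R := delta ^+ r / \sum_(s < T) delta ^+ s.

Lemma weight_ge0 r : 0 <= weight r.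
Proof. by rewrite divr_ge0 ?exprn_ge0 ?ltW ?(@sum_expr_gt0 T id). Qed.

Lemma weight_sum1 : \sum_r weight r = 1.
Proof. by rewrite -mulr_suml divff // gt_eqF // (@sum_expr_gt0 T id). Qed.

End Weights.

Section Payoffs.
Variables (R : realType) (n : nat) (A : 'I_n -> finType).
Variables (u : 'I_n -> profile A -> R) (delta : R) (T : nat).
Hypotheses (n_gt0 : (0 < n)%N) (T_gt0 : (0 < T)%N) (delta_gt0 : 0 < delta).

Lemma upay_mod m (m_gt0 : (0 < m)%N) (a : {ffun 'I_m -> profile A}) i s :
  upay u a i s = u i (a (Ordinal (ltn_pmod s m_gt0))).
Proof.
rewrite /upay; case: insubP => [j _ val_j|] /=; last by rewrite ltn_pmod.
by congr (u i (a _)); apply: val_inj.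
Qed.

Lemma upay_slice (a : {ffun 'I_(n * T) -> profile A}) i k (r : 'I_T) :
  upay u a i (i * T + (k * T + r)) = upay u (slice a r) i (i + k).
Proof.
have nT_gt0 : (0 < n * T)%N by rewrite muln_gt0 n_gt0.
rewrite (upay_mod nT_gt0) (upay_mod n_gt0) ffunE.
by congr (u i (a _)); apply: val_inj; rewrite /= modn_block.
Qed.

Lemma Ui_slices a i :
  Ui u delta a i = \sum_(r < T) weight delta r * vi u delta T (slice a r) i.
Proof.
rewrite /Ui /vi /weight.
have -> : \sum_(k < n * T) delta ^+ k =
          \sum_(j < n) delta ^+ (j * T) * \sum_(r < T) delta ^+ r.
  rewrite sum_ord_mul; apply: eq_bigr => j _.
  by rewrite mulr_sumr; apply: eq_bigr => r _; rewrite exprD.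
rewrite (@sum_ord_mul _ n T (fun k => delta ^+ k * upay u a i (i * T + k))).
rewrite exchange_big -mulr_suml mulr_sumr; apply: eq_bigr => r _.
under eq_bigr do rewrite upay_slice exprD mulrAC.
rewrite -mulr_suml invfM; ring.
Qed.

Lemma Uvec_slices a :
  Uvec u delta a = \sum_(r < T) weight delta r *: vvec u delta T (slice a r).
Proof.
apply/rowP => i; rewrite !mxE summxE Ui_slices.
by apply: eq_bigr => r _; rewrite !mxE.
Qed.

Lemma Uvec_stretch b : Uvec u delta (stretch T_gt0 b) = vvec u delta T b.
Proof.
rewrite Uvec_slices; under eq_bigr do rewrite slice_stretch.
by rewrite -scaler_suml weight_sum1 //; apply: scale1r.
Qed.

End Payoffs.

Theorem theorem1 (R : realType) (n : nat) (hn : (2 <= n)%N)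
  (A : 'I_n -> finType) (hA : forall i, (0 < #|A i|)%N)
  (u : 'I_n -> profile A -> R)
  (delta : R) (hd0 : 0 < delta) (hd1 : delta <= 1)
  (T : nat) (hT : (0 < T)%N) :
  forall x : 'rV[R]_n,
    Fset u delta T x <->
    conv (fun y => exists a : {ffun 'I_n -> profile A}, y = vvec u delta T a) x.
Proof.
have n_gt0 : (0 < n)%N by apply: ltnW.
move=> x; split; apply: conv_trans => _ [a ->].
- rewrite (Uvec_slices u delta n_gt0 hT); apply: conv_sum_finType => [r||r].
  + exact: weight_ge0.
  + exact: weight_sum1.
  + by exists (slice a r).
- by apply: sub_conv; exists (stretch hT a); rewrite Uvec_stretch.
Qed.
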